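(* For every integer $m \ge 3$, the graph $P_m \boxtimes K_2$ is a planar graph that is closed locally Dirac; in particular there are infinitely many planar closed locally Dirac graphs.
   Context: $P_m$ is the path on $m$ vertices and $K_2$ the complete graph on 2 vertices. The strong product $G \boxtimes H$ has vertex set $V(G)\times V(H)$, with $(u,v)$ adjacent to $(x,y)$ iff either $u=x$ and $vy \in E(H)$, or $v=y$ and $ux \in E(G)$, or $ux \in E(G)$ and $vy \in E(H)$. A graph $G$ is closed locally Dirac if for every vertex $v$, the subgraph $\langle N[v]\rangle$ induced by the closed neighbourhood $N[v]=N(v)\cup\{v\}$ satisfies Dirac's condition, i.e. every vertex of $\langle N[v]\rangle$ has degree in $\langle N[v]\rangle$ at least $|N[v]|/2$. *)

From HB Require Import structures.
From mathcomp Require Import all_boot all_order all_algebra.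
From mathcomp Require Import all_classical all_reals topology normedtype.
Set Implicit Arguments. Unset Strict Implicit. Unset Printing Implicit Defensive.
Import Order.TTheory GRing.Theory Num.Theory numFieldNormedType.Exports.

(* A (simple) graph is an adjacency relation [g : rel T] on a finite type T. *)

Definition path_graph (m : nat) : rel 'I_m :=
  fun i j => (i.+1 == j :> nat) || (j.+1 == i :> nat).

Definition complete_graph (n : nat) : rel 'I_n := fun i j => i != j.

Definition strong_prod (T U : finType) (g : rel T) (h : rel U) : rel (T * U) :=
  fun x y => [|| (x.1 == y.1) && h x.2 y.2,
                 (x.2 == y.2) && g x.1 y.1
               | g x.1 y.1 && h x.2 y.2].

Definition closed_nbhd (T : finType) (g : rel T) (v : T) : {set T} :=
  [set w | (w == v) || g v w].

Definition deg_in (T : finType) (g : rel T) (S : {set T}) (w : T) : nat :=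
  #|[set x in S | g w x]|.

Definition closed_locally_Dirac (T : finType) (g : rel T) : Prop :=
  forall v w : T, w \in closed_nbhd g v ->
    #|closed_nbhd g v| <= 2 * deg_in g (closed_nbhd g v) w.

Local Open Scope ring_scope.
Local Open Scope classical_set_scope.

(* Planarity: a drawing in the plane R x R, vertices as distinct points,
   each edge uv as a simple arc (continuous, injective on [0,1]) from u to v,
   arc interiors avoiding vertex points and interiors of other edges' arcs. *)
Definition unit_interval (R : realType) : set R := [set t | 0 <= t <= 1].
Definition open_unit_interval (R : realType) : set R := [set t | 0 < t < 1].

Definition planar (R : realType) (T : finType) (g : rel T) : Prop :=
  exists (pos : T -> R * R) (arc : T -> T -> R -> R * R),
    injective pos /\
    (forall u v, g u v ->
       [/\ {within @unit_interval R, continuous (arc u v)},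
           {in @unit_interval R &, injective (arc u v)},
           arc u v 0 = pos u, arc u v 1 = pos v &
           forall t w, @open_unit_interval R t -> arc u v t <> pos w]) /\
    (forall u v x y, g u v -> g x y ->
       ~ ((x = u /\ y = v) \/ (x = v /\ y = u)) ->
       forall s t, @open_unit_interval R s -> @open_unit_interval R t ->
         arc u v s <> arc x y t).

From mathcomp Require Import all_boot all_order all_algebra.
From mathcomp Require Import all_classical all_reals topology normedtype.
From mathcomp Require Import zify ring lra.
Import Order.TTheory GRing.Theory Num.Theory numFieldNormedType.Exports.

(* Write the vertices of P_m ⊠ K_n as (column, row) and note that two
   vertices are adjacent iff they are distinct and their columns differ by at
   most one.  So N[v] consists of at most three columns, among them the whole
   column of v, and a vertex w of N[v] sees everything in N[v] but itself when
   it lies in v's column, and otherwise at least v's column and the rest of its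
   own column; with n >= 2 this is at least half of |N[v]| <= 3n.

   For planarity, put (i, a) at (±(i+1), 0), the sign chosen by a, and measure
   points by the gauge x^2 + |y|, whose level set at r^2 is the pair of
   parabolic arcs |y| = r^2 - x^2 through (±r, 0).  Each edge is drawn so that
   the square root of the gauge moves linearly from one endpoint's radius to
   the other's: the rung inside column i runs along the upper arc of level
   i+1; of the four edges spanning columns i and i+1, the two that keep their
   row run along the x-axis and the two that switch it through the open
   annulus between, one above and one below the axis.  The gauge of a point
   therefore determines the column and the parameter, and its signs determine
   the edge. *)

Lemma strong_prod_path_completeE m n (x y : 'I_m * 'I_n) :
  strong_prod (@path_graph m) (@complete_graph n) x y =
  [&& x != y, x.1 <= y.1 + 1 & y.1 <= x.1 + 1].
Proof.
case: x => i a; case: y => j b.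
rewrite /strong_prod /path_graph /complete_graph /= xpair_eqE -!val_eqE /=.
by case: (a == b :> nat) => /=; lia.
Qed.

Section StrongProdPathComplete.
Variables m n : nat.
Local Notation V := ('I_m * 'I_n)%type.
Local Notation G := (strong_prod (@path_graph m) (@complete_graph n)).

Lemma in_closed_nbhd_path_complete (v w : V) :
  (w \in closed_nbhd G v) = (w.1 <= v.1 + 1) && (v.1 <= w.1 + 1).
Proof.
rewrite /closed_nbhd inE strong_prod_path_completeE [v == w]eq_sym.
by case: eqP => [-> | _] /=; lia.
Qed.

Lemma strong_prod_path_complete_sym : symmetric G.
Proof.
by move=> u v; rewrite !strong_prod_path_completeE eq_sym; case: (v == u) => /=; lia.
Qed.

Definition column (j : 'I_m) : {set V} := [set x | x.1 == j].

Lemma card_column j : #|column j| = n.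
Proof.
have -> : column j = finset.setX [set j] [set: 'I_n].
  by apply/finset.setP => -[i a]; rewrite !inE andbT.
by rewrite cardsX cards1 cardsT card_ord mul1n.
Qed.

Lemma card_column_D1 (x : V) : #|column x.1 :\ x| = n.-1.
Proof.
have := cardsD1 x (column x.1); rewrite card_column inE eqxx.
by move=> /(congr1 predn) ->.
Qed.

Lemma column_sub_closed_nbhd (v : V) : column v.1 \subset closed_nbhd G v.
Proof.
by apply/fintype.subsetP => x; rewrite inE in_closed_nbhd_path_complete => /eqP ->; lia.
Qed.

Lemma card_closed_nbhd_le (v : V) : #|closed_nbhd G v| <= 3 * n.
Proof.
pose f (x : V) : 'I_3 * 'I_n := (inord (x.1 + 1 - v.1), x.2).
have f_inj : {in closed_nbhd G v &, injective f}.
  move=> [i a] [j b]; rewrite !in_closed_nbhd_path_complete /= => hi hj.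
  case=> /(congr1 val) /=; rewrite !inordK; try lia.
  by move=> eij ->; congr pair; apply/val_inj => /=; lia.
rewrite -(card_in_imset f_inj); apply: leq_trans (max_card _) _.
by rewrite card_prod !card_ord mulnC.
Qed.

Lemma deg_in_closed_nbhd_same_column {v w : V} :
  w \in closed_nbhd G v -> w.1 = v.1 ->
  deg_in G (closed_nbhd G v) w = #|closed_nbhd G v| - 1.
Proof.
move=> wN wv; rewrite /deg_in.
have -> : [set x in closed_nbhd G v | G w x] = closed_nbhd G v :\ w.
  apply/finset.setP => x; rewrite in_setD1 finset.in_set.
  rewrite !in_closed_nbhd_path_complete strong_prod_path_completeE wv [w == x]eq_sym.
  by case: (x == w) => /=; lia.
by rewrite [#|closed_nbhd G v|](cardsD1 w) wN add1n subn1.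
Qed.

Lemma deg_in_closed_nbhd_other_column {v w : V} :
  w \in closed_nbhd G v -> w.1 != v.1 ->
  (2 * n).-1 <= deg_in G (closed_nbhd G v) w.
Proof.
move=> wN wv; rewrite in_closed_nbhd_path_complete in wN.
have disj : column v.1 :&: (column w.1 :\ w) = finset.set0.
  apply/finset.setP => x; rewrite !inE; apply/negbTE.
  by apply: contra wv => /and3P[/eqP <- _ /eqP ->].
have sub : column v.1 :|: (column w.1 :\ w) \subset [set x in closed_nbhd G v | G w x].
  apply/fintype.subsetP => x hx; rewrite inE in_closed_nbhd_path_complete.
  rewrite strong_prod_path_completeE [w == x]eq_sym.
  move: hx; rewrite !inE; case/orP=> [/eqP xv | /andP[-> /eqP ->]]; last by lia.
  have -> : x != w by apply: contra wv => /eqP <-; rewrite xv.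
  by rewrite xv; lia.
rewrite /deg_in; apply: leq_trans (subset_leq_card sub).
rewrite cardsU disj finset.cards0 subn0 card_column.
by rewrite card_column_D1; lia.
Qed.

Lemma closed_locally_Dirac_strong_prod_path_complete :
  1 < n -> closed_locally_Dirac G.
Proof.
move=> n_gt1 v w wN.
have col_le : n <= #|closed_nbhd G v|.
  by have := subset_leq_card (column_sub_closed_nbhd v); rewrite card_column.
have [wv | wv] := eqVneq w.1 v.1.
  by rewrite deg_in_closed_nbhd_same_column //; lia.
have := deg_in_closed_nbhd_other_column wN wv.
have := card_closed_nbhd_le v; lia.
Qed.

End StrongProdPathComplete.

Section RealContinuity.
Variable R : realType.
Local Open Scope ring_scope.
Implicit Types f g : R -> R.

Lemma continuous_addf f g :
  continuous f -> continuous g -> continuous (fun t => f t + g t).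
Proof. by move=> cf cg t; exact: (cvgD (cf t) (cg t)). Qed.

Lemma continuous_mulf f g :
  continuous f -> continuous g -> continuous (fun t => f t * g t).
Proof. by move=> cf cg t; exact: (cvgM (cf t) (cg t)). Qed.

Lemma continuous_sqrf f : continuous f -> continuous (fun t => f t ^+ 2).
Proof. by move=> cf; apply: continuous_mulf. Qed.

Lemma continuous_oppf f : continuous f -> continuous (fun t => - f t).
Proof. by move=> cf t; exact: (cvgN (cf t)). Qed.

Lemma continuous_pairf f g :
  continuous f -> continuous g -> continuous (fun t => (f t, g t)).
Proof. by move=> cf cg t; exact: (cvg_pair (cf t) (cg t)). Qed.

End RealContinuity.

Section PlanarDrawing.
Variable R : realType.
Local Open Scope ring_scope.

Definition radius (i : nat) : R := i.+1%:R.

Lemma radius_ge1 i : 1 <= radius i.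
Proof. by rewrite ler1n. Qed.

Lemma radiusS i : radius i.+1 = radius i + 1.
Proof. by rewrite /radius -natr1. Qed.

Lemma radius_inj : injective radius.
Proof. by move=> i j /eqP; rewrite eqr_nat => /eqP []. Qed.

Lemma radius_add1_le {i j : nat} : (i < j)%N -> radius i + 1 <= radius j.
Proof. by move=> ij; rewrite -radiusS ler_nat ltnS. Qed.

Lemma radius_neq_addr {i j : nat} {t : R} : 0 < t < 1 -> radius i <> radius j + t.
Proof.
move=> /andP[t0 t1]; case: (ltngtP i j) => [ij|ji|<-] eij.
- by have := radius_add1_le ij; lra.
- by have := radius_add1_le ji; lra.
- by lra.
Qed.

Lemma radius_addr_inj {i j : nat} {s t : R} : 0 < s < 1 -> 0 < t < 1 ->
  radius i + s = radius j + t -> i = j.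
Proof.
move=> /andP[s0 s1] /andP[t0 t1]; case: (ltngtP i j) => // [ij|ji] eij; exfalso.
- by have := radius_add1_le ij; lra.
- by have := radius_add1_le ji; lra.
Qed.

Lemma lt01_le01 {t : R} : 0 < t < 1 -> 0 <= t <= 1.
Proof. by case/andP=> t0 t1; rewrite !ltW. Qed.

Definition side (a : 'I_2) : R := if a == ord0 then 1 else -1.

Lemma side_neq0 a : side a != 0.
Proof. by rewrite /side; case: ifP => _; rewrite ?oppr_eq0 oner_eq0. Qed.

Lemma normr_side a : `|side a| = 1.
Proof. by rewrite /side; case: ifP => _; rewrite ?normrN normr1. Qed.

Lemma sqr_side a : side a ^+ 2 = 1.
Proof. by rewrite /side; case: ifP => _; rewrite ?sqrrN expr1n. Qed.

Lemma ord2_neq_eq (a b c : 'I_2) : b != a -> c != a -> b = c.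
Proof. by case: a b c => [[|[|?]] ?] [[|[|?]] ?] [[|[|?]] ?] //= _ _; apply: val_inj. Qed.

Lemma side_neq {a b : 'I_2} : a != b -> side b = - side a.
Proof.
by case: a b => [[|[|?]] ?] [[|[|?]] ?] //= _; rewrite /side /= ?opprK.
Qed.

Lemma side_inj : injective side.
Proof.
move=> a b eab; have [// | /side_neq ba] := eqVneq a b.
have : side a = 0 by move: eab; rewrite ba; lra.
by move/eqP; rewrite (negbTE (side_neq0 a)).
Qed.

Variable m : nat.
Local Notation V := ('I_m * 'I_2)%type.
Local Notation G := (strong_prod (@path_graph m) (@complete_graph 2)).
Implicit Types (u v x y : V) (s t : R).

Lemma eq_vertex x y : x.1 = y.1 :> nat -> x.2 = y.2 -> x = y.
Proof. by case: x y => [i a] [j b] /= /val_inj -> ->. Qed.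

Definition vertex_pos x : R * R := (side x.2 * radius x.1, 0).

Definition arc_radius u v t : R := (1 - t) * radius u.1 + t * radius v.1.

Definition arc_height u v t : R := 4 * arc_radius u v t ^+ 2 * (t * (1 - t)).

Definition arc_tilt u v : R :=
  if (u.1 < v.1)%N then side u.2 else if (v.1 < u.1)%N then side v.2 else 1.

Definition edge_arc u v t : R * R :=
  if u.2 == v.2 then (side u.2 * arc_radius u v t, 0)
  else (side u.2 * arc_radius u v t * (1 - 2 * t), arc_tilt u v * arc_height u v t).

Definition gauge (p : R * R) : R := p.1 ^+ 2 + `|p.2|.

Lemma edge_arcC u v t : edge_arc v u t = edge_arc u v (1 - t).
Proof.
have rC : arc_radius v u t = arc_radius u v (1 - t) by rewrite /arc_radius; ring.
have hC : arc_height v u t = arc_height u v (1 - t) by rewrite /arc_height rC; ring.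
have tC : arc_tilt v u = arc_tilt u v by rewrite /arc_tilt; case: ltngtP.
rewrite /edge_arc [v.2 == u.2]eq_sym rC hC tC.
have [-> // | uv] := eqVneq u.2 v.2.
by rewrite (side_neq uv); congr pair; ring.
Qed.

Lemma edge_arc0 u v : edge_arc u v 0 = vertex_pos u.
Proof. by rewrite /edge_arc /arc_height /arc_radius /vertex_pos; case: ifP => _; congr pair; ring. Qed.

Lemma edge_arc1 u v : edge_arc u v 1 = vertex_pos v.
Proof. by rewrite -[1](subr0 1) -edge_arcC edge_arc0. Qed.

Lemma normr_arc_tilt u v : `|arc_tilt u v| = 1.
Proof. by rewrite /arc_tilt; case: ifP => _; [|case: ifP => _]; rewrite ?normr_side ?normr1. Qed.

Lemma arc_radius_ge1 u v t : 0 <= t <= 1 -> 1 <= arc_radius u v t.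
Proof.
move=> /andP[t0 t1]; have := radius_ge1 u.1; have := radius_ge1 v.1.
rewrite /arc_radius; nra.
Qed.

Lemma arc_height_gt0 u v t : 0 < t < 1 -> 0 < arc_height u v t.
Proof.
move=> /andP[t0 t1]; have r1 : 1 <= arc_radius u v t by apply: arc_radius_ge1; lra.
rewrite /arc_height !pmulr_rgt0 ?exprn_gt0 //; lra.
Qed.

Lemma gauge_edge_arc u v t : 0 <= t <= 1 -> gauge (edge_arc u v t) = arc_radius u v t ^+ 2.
Proof.
move=> /andP[t0 t1]; rewrite /gauge /edge_arc; case: ifP => _ /=.
  by rewrite normr0 addr0 exprMn sqr_side mul1r.
have h0 : 0 <= arc_height u v t.
  rewrite /arc_height mulr_ge0 //; first by rewrite mulr_ge0 ?sqr_ge0.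
  by rewrite mulr_ge0 // subr_ge0.
by rewrite normrM normr_arc_tilt mul1r (ger0_norm h0) !exprMn sqr_side /arc_height; ring.
Qed.

Lemma gauge_vertex_pos x : gauge (vertex_pos x) = radius x.1 ^+ 2.
Proof. by rewrite /gauge /= normr0 addr0 exprMn sqr_side mul1r. Qed.

Lemma arc_radius_eq_of_edge_arc_eq {u v x y s t} : 0 <= s <= 1 -> 0 <= t <= 1 ->
  edge_arc u v s = edge_arc x y t -> arc_radius u v s = arc_radius x y t.
Proof.
move=> s01 t01 /(congr1 gauge); rewrite !gauge_edge_arc // => /eqP.
have := arc_radius_ge1 u v s s01; have := arc_radius_ge1 x y t t01.
by move=> ? ?; rewrite eqrXn2 // => [/eqP | | ]; lra.
Qed.

Lemma oriented_edge_cases {u v : V} : G u v -> (u.1 <= v.1)%N ->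
  (v.1 = u.1 :> nat /\ u.2 != v.2) \/ v.1 = u.1.+1 :> nat.
Proof.
rewrite strong_prod_path_completeE => /and3P[uv _ vu] le_uv.
have [e | ne] := eqVneq (u.1 : nat) v.1; last by right; lia.
left; split=> //; apply: contra uv => /eqP e2.
by apply/eqP; apply: eq_vertex.
Qed.

Section Rung.
Variables (u v : V).
Hypothesis rung : v.1 = u.1 :> nat.

Lemma arc_radius_rung t : arc_radius u v t = radius u.1.
Proof. by rewrite /arc_radius rung; ring. Qed.

Lemma arc_tilt_rung : arc_tilt u v = 1.
Proof. by rewrite /arc_tilt rung ltnn. Qed.

End Rung.

Section Span.
Variables (u v : V).
Hypothesis span : v.1 = u.1.+1 :> nat.

Lemma arc_radius_span t : arc_radius u v t = radius u.1 + t.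
Proof. by rewrite /arc_radius span radiusS; ring. Qed.

Lemma arc_tilt_span : arc_tilt u v = side u.2.
Proof. by rewrite /arc_tilt span ltnSn. Qed.

End Span.

Lemma oriented_edge_arc_neq_vertex_pos u v w t : G u v -> (u.1 <= v.1)%N ->
  0 < t < 1 -> edge_arc u v t <> vertex_pos w.
Proof.
move=> uv le_uv t01 e.
have t01' := lt01_le01 t01.
have hgt0 := arc_height_gt0 u v t t01.
have [[rung ne2] | span] := oriented_edge_cases uv le_uv.
  move: e; rewrite /edge_arc (negbTE ne2) arc_tilt_rung // mul1r => -[_].
  by move/eqP; rewrite gt_eqF.
have [e2 | ne2] := eqVneq u.2 v.2.
  have : radius w.1 = radius u.1 + t.
    move/(congr1 gauge): e; rewrite gauge_edge_arc // gauge_vertex_pos.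
    have := radius_ge1 u.1; case/andP: t01 => t0 _.
    by move=> ? /eqP; rewrite arc_radius_span // eqrXn2 // => [/eqP -> |]; lra.
  by apply: radius_neq_addr.
move: e; rewrite /edge_arc (negbTE ne2) arc_tilt_span // => -[_] /eqP.
by rewrite mulf_eq0 (negbTE (side_neq0 _)) gt_eqF.
Qed.

Lemma rung_edges_eq {u v x y} :
  v.1 = u.1 :> nat -> u.2 != v.2 -> y.1 = x.1 :> nat -> x.2 != y.2 ->
  x.1 = u.1 :> nat -> (x = u /\ y = v) \/ (x = v /\ y = u).
Proof.
move=> ru nu rx nx xu.
have [xu2 | nxu2] := eqVneq x.2 u.2.
  left; split; apply: eq_vertex; rewrite ?rx ?xu ?ru //.
  by apply: (ord2_neq_eq x.2); rewrite eq_sym // xu2.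
right; split; apply: eq_vertex; rewrite ?rx ?xu ?ru //.
  by apply: (ord2_neq_eq u.2); rewrite // eq_sym.
by apply: (ord2_neq_eq x.2); rewrite eq_sym.
Qed.

Lemma span_edges_eq {u v x y t} :
  v.1 = u.1.+1 :> nat -> y.1 = x.1.+1 :> nat -> x.1 = u.1 :> nat -> 0 < t < 1 ->
  edge_arc u v t = edge_arc x y t -> x = u /\ y = v.
Proof.
move=> su sx xu t01 e.
have t01' := lt01_le01 t01.
have rxu : arc_radius x y t = arc_radius u v t.
  by rewrite arc_radius_span // arc_radius_span // xu.
have hxu : arc_height x y t = arc_height u v t by rewrite /arc_height rxu.
have r_neq0 : arc_radius u v t != 0 by have := arc_radius_ge1 u v t t01'; lra.
have h_neq0 : arc_height u v t != 0 by rewrite gt_eqF ?arc_height_gt0.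
suff [xu2 yv2] : x.2 = u.2 /\ y.2 = v.2.
  by split; apply: eq_vertex; rewrite ?sx ?su ?xu.
move: e; rewrite /edge_arc rxu hxu !arc_tilt_span //.
case: eqVneq => [uv2 | nuv2]; case: eqVneq => [xy2 | nxy2] e;
  have /= e1 := congr1 fst e; have /= e2 := congr1 snd e.
- have xu2 : x.2 = u.2 by apply: side_inj; apply: (mulIf r_neq0).
  by rewrite -xy2 -uv2.
- by move/eqP: e2; rewrite eq_sym mulf_eq0 (negbTE (side_neq0 _)) (negbTE h_neq0).
- by move/eqP: e2; rewrite mulf_eq0 (negbTE (side_neq0 _)) (negbTE h_neq0).
- have xu2 : x.2 = u.2 by apply: side_inj; apply: (mulIf h_neq0).
  by split=> //; apply: (ord2_neq_eq x.2); rewrite eq_sym // xu2.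
Qed.

Lemma oriented_edge_arcs_eq {u v x y s t} : G u v -> G x y ->
  (u.1 <= v.1)%N -> (x.1 <= y.1)%N -> 0 < s < 1 -> 0 < t < 1 ->
  edge_arc u v s = edge_arc x y t -> (x = u /\ y = v) \/ (x = v /\ y = u).
Proof.
move=> uv xy le_uv le_xy s01 t01 e.
have s01' := lt01_le01 s01.
have t01' := lt01_le01 t01.
have eS := arc_radius_eq_of_edge_arc_eq s01' t01' e.
have [[ru nu] | su] := oriented_edge_cases uv le_uv;
  have [[rx nx] | sx] := oriented_edge_cases xy le_xy.
- rewrite !arc_radius_rung // in eS.
  by apply: rung_edges_eq => //; apply: radius_inj; rewrite eS.
- by rewrite arc_radius_rung // arc_radius_span // in eS; case: (radius_neq_addr t01 eS).
- by rewrite arc_radius_span // arc_radius_rung // in eS; case: (radius_neq_addr s01 (esym eS)).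
rewrite !arc_radius_span // in eS.
have xu : x.1 = u.1 :> nat by rewrite (radius_addr_inj t01 s01 (esym eS)).
have st : s = t by move: eS; rewrite xu; lra.
by subst s; left; apply: (span_edges_eq su sx xu t01).
Qed.

Lemma edge_arc_orient {u v s} : G u v -> 0 < s < 1 ->
  exists u' v' s', [/\ G u' v', (u'.1 <= v'.1)%N, 0 < s' < 1,
    edge_arc u v s = edge_arc u' v' s' & (u' = u /\ v' = v) \/ (u' = v /\ v' = u)].
Proof.
move=> uv s01; have [le_uv | lt_vu] := leqP u.1 v.1.
  by exists u, v, s; split=> //; left.
exists v, u, (1 - s); split; last by right.
- by rewrite strong_prod_path_complete_sym.
- exact: ltnW.
- by case/andP: s01 => ? ?; apply/andP; split; lra.
- by rewrite edge_arcC; congr edge_arc; ring.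
Qed.

Lemma edge_arc_neq_vertex_pos u v w t : G u v -> 0 < t < 1 ->
  edge_arc u v t <> vertex_pos w.
Proof.
move=> uv t01; have [u' [v' [t' [uv' le_uv' t01' -> _]]]] := edge_arc_orient uv t01.
exact: oriented_edge_arc_neq_vertex_pos.
Qed.

Lemma edge_arcs_eq {u v x y s t} : G u v -> G x y -> 0 < s < 1 -> 0 < t < 1 ->
  edge_arc u v s = edge_arc x y t -> (x = u /\ y = v) \/ (x = v /\ y = u).
Proof.
move=> uv xy s01 t01.
have [u' [v' [s' [uv' le_uv' s01' -> o_uv]]]] := edge_arc_orient uv s01.
have [x' [y' [t' [xy' le_xy' t01' -> o_xy]]]] := edge_arc_orient xy t01.
move=> /(oriented_edge_arcs_eq uv' xy' le_uv' le_xy' s01' t01').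
by case: o_uv o_xy => -[-> ->] [] [-> ->]; tauto.
Qed.

Lemma edge_arc_inj u v : G u v -> {in @unit_interval R &, injective (edge_arc u v)}.
Proof.
move=> uv s t; rewrite !in_setE /unit_interval /= => s01 t01 e.
have eS := arc_radius_eq_of_edge_arc_eq s01 t01 e.
have [ru | nru] := eqVneq (u.1 : nat) v.1.
  have nu2 : u.2 != v.2.
    move: uv; rewrite strong_prod_path_completeE => /and3P[uv _ _].
    by apply: contra uv => /eqP e2; apply/eqP; apply: eq_vertex.
  have c_neq0 : side u.2 * arc_radius u v t != 0.
    by rewrite mulf_neq0 ?side_neq0 //; have := arc_radius_ge1 u v t t01; lra.
  have /= := congr1 fst e; rewrite /edge_arc (negbTE nu2) /= eS => /(mulfI c_neq0).
  lra.
have nrad : radius v.1 - radius u.1 != 0.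
  by rewrite subr_eq0; apply: contra nru => /eqP /radius_inj ->.
have : (s - t) * (radius v.1 - radius u.1) = 0.
  by move: eS; rewrite /arc_radius => ?; lra.
by move/eqP; rewrite mulf_eq0 (negbTE nrad) orbF subr_eq0 => /eqP.
Qed.

Lemma edge_arc_continuous u v : continuous (edge_arc u v).
Proof.
rewrite /edge_arc /arc_height /arc_radius; case: (u.2 == v.2);
  apply: continuous_pairf;
  repeat first [ exact: cst_continuous | by move=> ? | apply: continuous_mulf
               | apply: continuous_sqrf | apply: continuous_addf | apply: continuous_oppf ].
Qed.

Lemma vertex_pos_inj : injective vertex_pos.
Proof.
move=> x y exy.
have rxy : radius x.1 = radius y.1.
  move/(congr1 gauge): exy; rewrite !gauge_vertex_pos => /eqP.
  by rewrite eqrXn2 // => /eqP.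
have r_neq0 : radius y.1 != 0 by have := radius_ge1 y.1; lra.
apply: eq_vertex; first exact: radius_inj.
by apply: side_inj; apply: (mulIf r_neq0); case: exy; rewrite rxy.
Qed.

Lemma planar_strong_prod_path_K2 : planar R G.
Proof.
exists vertex_pos, edge_arc; split; [exact: vertex_pos_inj | split].
- move=> u v uv; split.
  + exact/continuous_subspaceT/edge_arc_continuous.
  + exact: edge_arc_inj.
  + exact: edge_arc0.
  + exact: edge_arc1.
  + by move=> t w; apply: edge_arc_neq_vertex_pos.
- move=> u v x y uv xy not_same s t s01 t01 e.
  exact/not_same/(edge_arcs_eq uv xy s01 t01 e).
Qed.

End PlanarDrawing.

Theorem mainTheorem7 (m : nat) : 3 <= m ->
  (forall R : realType, planar R (strong_prod (@path_graph m) (@complete_graph 2))) /\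
  closed_locally_Dirac (strong_prod (@path_graph m) (@complete_graph 2)).
Proof.
move=> _; split. (* Neither property needs m >= 3. *)
- by move=> R; exact: planar_strong_prod_path_K2.
- exact: closed_locally_Dirac_strong_prod_path_complete.
Qed.
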